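(* Let $d>0$ and $\xi>0$. Then the functions \[ f_\pm(y)=\exp\!\Big(-d\,\operatorname{Re}\big(e^{-\mathrm{i}\pi/4}\sqrt{-\xi\pm\mathrm{i}y}\big)\Big) \] are decreasing functions of $y\ge0$, where $\sqrt{\cdot}$ denotes the principal branch of the square root (positive real part, cut along $(-\infty,0]$). *)

From HB Require Import structures.
From mathcomp Require Import all_boot all_order all_algebra.
From mathcomp Require Import all_classical all_reals.
From mathcomp Require Import sequences exp trigo.
From mathcomp.real_closed Require Import complex.
Set Implicit Arguments. Unset Strict Implicit. Unset Printing Implicit Defensive.
Import Order.TTheory GRing.Theory Num.Theory.
Local Open Scope ring_scope.
Local Open Scope complex_scope.

Section Defs.
Variable R : realType.

Definition rot_m_pi4 : R[i] := (cos (pi / 4%:R)) -i* (sin (pi / 4%:R)).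

Definition f_plus (d xi y : R) : R :=
  expR (- d * complex.Re (rot_m_pi4 * sqrtc ((- xi) +i* y))).

Definition f_minus (d xi y : R) : R :=
  expR (- d * complex.Re (rot_m_pi4 * sqrtc ((- xi) -i* y))).
End Defs.

From HB Require Import structures.
From mathcomp Require Import all_boot all_order all_algebra.
From mathcomp Require Import all_classical all_reals.
From mathcomp Require Import sequences exp trigo.
From mathcomp.real_closed Require Import complex.
From mathcomp Require Import ring lra.
Set Implicit Arguments. Unset Strict Implicit. Unset Printing Implicit Defensive.
Import Order.TTheory GRing.Theory Num.Theory.
Local Open Scope ring_scope.
Local Open Scope complex_scope.

(* Write sqrt(a + i b) = p + i q with p, q >= 0 for b >= 0 (and p - i q for
   b < 0), so that, as e^{-i pi/4} = (1 - i)/sqrt 2, the exponents of f_+ and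
   f_- are -(d/sqrt 2)(p + q) and -(d/sqrt 2)(p - q). Both p^2 = (|z| + a)/2
   and q^2 = (|z| - a)/2 increase strictly with |b|, so p + q does. Moreover
   p^2 - q^2 = a = -xi < 0, whence p - q = -xi / (p + q) increases as well. *)

Section PrincipalSqrtParts.
Variable R : rcfType.
Implicit Types a b : R.

Definition modulus a b := Num.sqrt (a ^+ 2 + b ^+ 2).
Definition sqrtc_re a b := Num.sqrt ((modulus a b + a) / 2%:R).
Definition sqrtc_im a b := Num.sqrt ((modulus a b - a) / 2%:R).

Lemma sqrtc_nneg_im a b : 0 <= b -> sqrtc (a +i* b) = sqrtc_re a b +i* sqrtc_im a b.
Proof.
move=> b_ge0; rewrite /sqrtc /sqrtc_re /sqrtc_im /modulus.
by case: eqP => [|/eqP b_neq0]; rewrite ?gtr0_sg ?lt0r ?b_neq0 ?mul1r.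
Qed.

Lemma sqrtc_neg_im a b : 0 < b -> sqrtc (a -i* b) = sqrtc_re a b -i* sqrtc_im a b.
Proof.
move=> b_gt0; rewrite /sqrtc /sqrtc_re /sqrtc_im /modulus sqrrN.
by rewrite oppr_eq0 gt_eqF // sgrN gtr0_sg // mulN1r.
Qed.

Lemma norm_le_modulus a b : `|a| <= modulus a b.
Proof. by rewrite -sqrtr_sqr ler_sqrt ?lerDl ?sqr_ge0 // addr_ge0 ?sqr_ge0. Qed.

Lemma modulus_bounds a b : - modulus a b <= a <= modulus a b.
Proof. by rewrite -ler_norml norm_le_modulus. Qed.

Lemma modulus_lt a b1 b2 : 0 <= b1 -> b1 < b2 -> modulus a b1 < modulus a b2.
Proof.
move=> b1_ge0 lt_b12; rewrite ltr_sqrt.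
  by rewrite ltrD2l ltr_pXn2r ?nnegrE // (le_trans b1_ge0) ?ltW.
by rewrite ltr_wpDl ?sqr_ge0 // exprn_gt0 // (le_lt_trans b1_ge0).
Qed.

Lemma sqrt_half_lt (u v : R) : 0 <= u -> u < v -> Num.sqrt (u / 2%:R) < Num.sqrt (v / 2%:R).
Proof.
move=> u_ge0 lt_uv; rewrite ltr_sqrt ?ltr_pM2r ?invr_gt0 ?ltr0n //.
by rewrite divr_gt0 ?ltr0n // (le_lt_trans u_ge0).
Qed.

Lemma sqrtc_re_lt a b1 b2 : 0 <= b1 -> b1 < b2 -> sqrtc_re a b1 < sqrtc_re a b2.
Proof.
move=> b1_ge0 lt_b12; apply: sqrt_half_lt; last by rewrite ltrD2r modulus_lt.
by have /andP[] := modulus_bounds a b1; lra.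
Qed.

Lemma sqrtc_im_lt a b1 b2 : 0 <= b1 -> b1 < b2 -> sqrtc_im a b1 < sqrtc_im a b2.
Proof.
move=> b1_ge0 lt_b12; apply: sqrt_half_lt; last by rewrite ltrD2r modulus_lt.
by have /andP[] := modulus_bounds a b1; lra.
Qed.

Lemma sqrtc_re_sqr_sub_im a b : sqrtc_re a b ^+ 2 - sqrtc_im a b ^+ 2 = a.
Proof.
have /andP[lb ub] := modulus_bounds a b.
by rewrite !sqr_sqrtr ?divr_ge0 ?ler0n //; [field | lra | lra].
Qed.

Lemma sqrtc_im_gt0 a b : a < 0 -> 0 < sqrtc_im a b.
Proof.
move=> a_lt0; have /andP[lb _] := modulus_bounds a b.
by rewrite sqrtr_gt0 divr_gt0 ?ltr0n //; lra.
Qed.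

Lemma sqrtc_re_add_im_gt0 a b : a < 0 -> 0 < sqrtc_re a b + sqrtc_im a b.
Proof. by move=> a_lt0; rewrite ltr_wpDl ?sqrtr_ge0 ?sqrtc_im_gt0. Qed.

Lemma sqrtc_re_sub_im a b : a < 0 ->
  sqrtc_re a b - sqrtc_im a b = a / (sqrtc_re a b + sqrtc_im a b).
Proof.
move=> a_lt0; rewrite -[X in X / _](sqrtc_re_sqr_sub_im a b) subr_sqr mulfK //.
by rewrite gt_eqF ?sqrtc_re_add_im_gt0.
Qed.

Lemma sqrtc_re_sub_im_lt a b1 b2 : a < 0 -> 0 <= b1 -> b1 < b2 ->
  sqrtc_re a b1 - sqrtc_im a b1 < sqrtc_re a b2 - sqrtc_im a b2.
Proof.
move=> a_lt0 b1_ge0 lt_b12; rewrite !sqrtc_re_sub_im // ltr_nM2l // ltf_pV2.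
- by rewrite ltrD ?sqrtc_re_lt ?sqrtc_im_lt.
- by rewrite posrE sqrtc_re_add_im_gt0.
- by rewrite posrE sqrtc_re_add_im_gt0.
Qed.

End PrincipalSqrtParts.

Section RotationByMinusPiQuarter.
Variable R : realType.
Implicit Types d xi y u v : R.

Local Notation c := (cos (pi / 4%:R) : R).

Lemma cos_piquarter_gt0 : 0 < c.
Proof. by apply: cos_gt0_pihalf; have := @pi_gt0 R; lra. Qed.

Lemma sin_piquarter : sin (pi / 4%:R) = c.
Proof.
by rewrite -[LHS](divfK (lt0r_neq0 cos_piquarter_gt0)) -/(tan _) tan_piquarter mul1r.
Qed.

Lemma Re_rot_m_pi4 u v : complex.Re (rot_m_pi4 R * (u +i* v)) = c * (u + v).
Proof. by rewrite /rot_m_pi4 /= sin_piquarter; ring. Qed.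

Lemma f_plus_sqrtc_parts d xi y : 0 <= y ->
  f_plus d xi y = expR (- (d * c) * (sqrtc_re (- xi) y + sqrtc_im (- xi) y)).
Proof. by move=> y_ge0; rewrite /f_plus sqrtc_nneg_im // Re_rot_m_pi4 !mulNr mulrA. Qed.

Lemma f_minus_sqrtc_parts d xi y : 0 < y ->
  f_minus d xi y = expR (- (d * c) * (sqrtc_re (- xi) y - sqrtc_im (- xi) y)).
Proof. by move=> y_gt0; rewrite /f_minus sqrtc_neg_im // Re_rot_m_pi4 !mulNr mulrA. Qed.

Lemma expR_nmul_lt (k u v : R) : 0 < k -> u < v -> expR (- k * v) < expR (- k * u).
Proof. by move=> k_gt0 lt_uv; rewrite ltr_expR ltr_nM2l // oppr_lt0. Qed.

End RotationByMinusPiQuarter.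

Theorem lemma3p2 (R : realType) (d xi : R) (hd : 0 < d) (hxi : 0 < xi) :
  (forall y1 y2 : R, 0 <= y1 -> y1 < y2 -> f_plus d xi y2 < f_plus d xi y1) /\
  (forall y1 y2 : R, 0 < y1 -> y1 < y2 -> f_minus d xi y2 < f_minus d xi y1).
Proof.
have dc_gt0 : 0 < d * cos (pi / 4%:R) by rewrite mulr_gt0 ?cos_piquarter_gt0.
split=> [y1 y2 y1_ge0 | y1 y2 y1_gt0] lt_y12.
- have y2_ge0 : 0 <= y2 by rewrite (le_trans y1_ge0) ?ltW.
  rewrite !f_plus_sqrtc_parts //; apply: expR_nmul_lt => //.
  by rewrite ltrD ?sqrtc_re_lt ?sqrtc_im_lt.
- have y2_gt0 : 0 < y2 by rewrite (lt_trans y1_gt0).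
  rewrite !f_minus_sqrtc_parts //; apply: expR_nmul_lt => //.
  by rewrite sqrtc_re_sub_im_lt ?oppr_lt0 ?ltW.
Qed.
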